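(* Let $q\ge2$ and let $W$ be a $q$-ary symmetric channel on an alphabet $\mathcal{X}=\mathcal{Y}$ with $|\mathcal{X}|=q$, i.e., $W(y|x)=v$ if $y=x$ and $W(y|x)=u$ if $y\ne x$, where $u,v\in[0,1]$ and $v=1-(q-1)u$. Then $$\eta^J_\infty(W):=\sup_{P_0,P_1\in\Delta(\mathcal{X})}\frac{D^J_\infty(Q_0,Q_1)}{D^J_\infty(P_0,P_1)}=\frac{|v-u|}{v+u},$$ where $Q_i(y)=\sum_xP_i(x)W(y|x)$. Furthermore, this supremum is achieved in the limit by uniform binary distributions (distinct input pairs supported on a common two-element set that both converge to the uniform distribution on that set).
   Context: $\Delta(\mathcal{X})$ is the probability simplex on $\mathcal{X}$. $D_\infty(P\|Q)=\log\max_x\frac{P(x)}{Q(x)}$ and $D^J_\infty(P,Q)=D_\infty(P\|Q)+D_\infty(Q\|P)$. *)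

From HB Require Import structures.
From mathcomp Require Import all_boot all_order all_algebra.
From mathcomp Require Import all_classical all_reals all_analysis.
Set Implicit Arguments. Unset Strict Implicit. Unset Printing Implicit Defensive.
Import Order.TTheory GRing.Theory Num.Theory.
Import numFieldNormedType.Exports.
Local Open Scope classical_set_scope.
Local Open Scope ring_scope.

Section Defs.
Variables (R : realType) (X : finType).

Definition is_dist (P : X -> R) : Prop :=
  (forall x, 0 <= P x) /\ \sum_(x : X) P x = 1.

(* P and Q have the same support (i.e. D^J_oo(P,Q) < +oo). *)
Definition same_support (P Q : X -> R) : Prop :=
  forall x, (P x == 0) = (Q x == 0).

(* max_x P(x)/Q(x); terms with P x = Q x = 0 contribute 0/0 = 0 (and are
   ignored since the max is >= 1 for distributions). Only used on pairs with
   the same support, where this is the paper's quantity. *)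
Definition maxratio (P Q : X -> R) : R :=
  \big[Num.max/0]_(x : X) (P x / Q x).

Definition Dinf (P Q : X -> R) : R := ln (maxratio P Q).

Definition DJinf (P Q : X -> R) : R := Dinf P Q + Dinf Q P.

(* q-ary symmetric channel: W x y = W(y|x). *)
Definition qsc (u v : R) (x y : X) : R := if y == x then v else u.

Definition push (W : X -> X -> R) (P : X -> R) (y : X) : R :=
  \sum_(x : X) P x * W x y.

Definition jratio (W : X -> X -> R) (P0 P1 : X -> R) : R :=
  DJinf (push W P0) (push W P1) / DJinf P0 P1.

(* admissible input pairs: distinct distributions with 0 < D^J_oo < +oo *)
Definition admissible (P0 P1 : X -> R) : Prop :=
  [/\ is_dist P0, is_dist P1, same_support P0 P1 & exists x, P0 x != P1 x].

Definition unif_binary_seq (a b : X) (P0 P1 : nat -> X -> R) : Prop :=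
  [/\ forall n, is_dist (P0 n) /\ is_dist (P1 n),
      forall n x, x != a -> x != b -> P0 n x = 0 /\ P1 n x = 0,
      forall n, exists x, P0 n x != P1 n x,
      (fun n => P0 n a) @ \oo --> (2^-1 : R) /\ (fun n => P0 n b) @ \oo --> (2^-1 : R)
    & (fun n => P1 n a) @ \oo --> (2^-1 : R) /\ (fun n => P1 n b) @ \oo --> (2^-1 : R)].

End Defs.

(** On a binary input [(p, 1 - p)] supported on [{a, b}] the channel acts on the odds
    [x = p / (1 - p)] by [x |-> (v x + u) / (u x + v)].  In logarithmic coordinates this map
    has slope [x (v^2 - u^2) / ((v x + u) (u x + v))], which is at most
    [eta = |v - u| / (v + u)] in absolute value since [(v x + u) (u x + v) >= (u + v)^2 x],
    with equality at [x = 1].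

    Upper bound: with [M = max P0/P1] and [N = max P1/P0], each output ratio
    [(u + (v - u) P0 y) / (u + (v - u) P1 y)] is maximised, under the linear constraints that
    [(P0 y, P1 y)] satisfies, at a vertex given by the binary pair of odds
    [M (N - 1) / (M - 1)] and [(N - 1) / (N (M - 1))].  These log-odds differ by
    [ln M + ln N = D^J(P0, P1)], so the slope bound yields [D^J(Q0, Q1) <= eta D^J(P0, P1)].

    Lower bound: for binary pairs [D^J(P0, P1)] is exactly the difference of input log-odds and
    [D^J(Q0, Q1)] is at least the difference of output log-odds, so as both inputs approach the
    uniform distribution the ratio tends to the slope at [x = 1], i.e. to [eta]. *)

From HB Require Import structures.
From mathcomp Require Import all_boot all_order all_algebra.
From mathcomp Require Import all_classical all_reals all_analysis.
From mathcomp Require Import ring lra.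
Set Implicit Arguments.
Unset Strict Implicit.
Unset Printing Implicit Defensive.

Import Order.TTheory GRing.Theory Num.Theory.
Import numFieldNormedType.Exports.
Local Open Scope classical_set_scope.
Local Open Scope ring_scope.

Lemma addr_wmul_gt0 (R : realFieldType) (a b x y : R) :
  0 <= a -> 0 <= b -> 0 < a + b -> 0 < x -> 0 < y -> 0 < a * x + b * y.
Proof.
move=> a0 b0 ab x0 y0; have [a_gt0|a_le0] := ltP 0 a.
  by rewrite ltr_pwDl ?mulr_gt0 ?mulr_ge0 // ltW.
have -> : a = 0 by apply/le_anti/andP.
by rewrite mul0r add0r mulr_gt0 //; lra.
Qed.

(* [b = 0] is allowed, [a / 0] being [0]. *)
Lemma ler_div_cross (R : realFieldType) (a b n d : R) :
  0 <= b -> 0 < d -> 0 <= n -> a * d <= b * n -> a / b <= n / d.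
Proof.
move=> b0 d0 n0 h; have [->|b_neq0] := eqVneq b 0.
  by rewrite invr0 mulr0 divr_ge0 // ltW.
have b_gt0 : 0 < b by rewrite lt_def b_neq0.
by rewrite ler_pdivrMr // mulrAC ler_pdivlMr // [n * b]mulrC.
Qed.

(* No positivity is needed on [m]: [ln m = 0] for [m <= 0]. *)
Lemma ln_le_ge1 (R : realType) (m B : R) : 1 <= B -> m <= B -> ln m <= ln B.
Proof.
move=> B1 mB; have [m_le0|m_gt0] := leP m 0; first by rewrite ln0 // ln_ge0.
by rewrite ler_ln ?posrE //; lra.
Qed.

Lemma is_derive_ln_affine (R : realType) (a b z : R) : 0 < a * z + b ->
  is_derive z 1 (fun x => ln (a * x + b)) ((a * z + b)^-1 * a).
Proof.
move=> az_gt0; have d_affine : is_derive z 1 (fun x => a * x + b) a.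
  by apply: is_derive_eq; rewrite /GRing.scale /= addr0 mulr1.
exact: (@is_derive1_comp _ (@ln R) _ z _ _ (is_derive1_ln az_gt0) d_affine).
Qed.

Section Vertex.
Variable R : realType.

(* Odds of the binary pair [(M (N - 1), M - 1) / (M N - 1)] versus
   [(N - 1, N (M - 1)) / (M N - 1)], whose two max ratios are [M] and [N]. *)
Definition vertex_odds0 (M N : R) : R := M * (N - 1) / (M - 1).
Definition vertex_odds1 (M N : R) : R := (N - 1) / (N * (M - 1)).

Lemma vertex_odds_le M N : 1 < M -> 1 < N ->
  0 < vertex_odds1 M N <= vertex_odds0 M N.
Proof.
move=> M1 N1; have M0 : 0 < M - 1 by lra.
have -> : vertex_odds0 M N = (N - 1) / (M - 1) * M.
  by rewrite /vertex_odds0; field; rewrite gt_eqF.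
have -> : vertex_odds1 M N = (N - 1) / (M - 1) * N^-1.
  by rewrite /vertex_odds1; field; rewrite !gt_eqF //; lra.
have c0 : 0 < (N - 1) / (M - 1) by rewrite divr_gt0 //; lra.
rewrite mulr_gt0 ?invr_gt0 //=; last lra.
by rewrite ler_pM2l // (@le_trans _ _ 1) ?invf_le1 //; lra.
Qed.

Lemma ln_vertex_odds M N : 1 < M -> 1 < N ->
  ln (vertex_odds0 M N) - ln (vertex_odds1 M N) = ln M + ln N.
Proof.
move=> M1 N1; case/andP: (vertex_odds_le M1 N1) => o1_gt0 o1_le.
rewrite -ln_div ?posrE //; last exact: lt_le_trans o1_le.
have -> : vertex_odds0 M N / vertex_odds1 M N = M * N.
  by rewrite /vertex_odds0 /vertex_odds1; field; rewrite !gt_eqF //; lra.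
by rewrite lnM ?posrE //; lra.
Qed.

(* At [x = vertex_odds0 M N], [(M - 1) (v x + u) = vertex_num v u M N]. *)
Definition vertex_num (a b M N : R) : R := a * M * (N - 1) + b * (M - 1).

Lemma vertex_num_gt0 a b M N : 0 <= a -> 0 <= b -> 0 < a + b -> 1 < M -> 1 < N ->
  0 < vertex_num a b M N.
Proof.
move=> a0 b0 ab M1 N1; rewrite /vertex_num -mulrA.
by apply: addr_wmul_gt0 => //; rewrite ?mulr_gt0 ?subr_gt0 //; lra.
Qed.

Lemma vertex_num_le a b M N : b <= a -> 1 <= M -> 1 <= N ->
  vertex_num b a N M <= vertex_num a b M N.
Proof.
move=> ba M1 N1; rewrite -subr_ge0.
have -> : vertex_num a b M N - vertex_num b a N M = (a - b) * (M - 1) * (N - 1).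
  by rewrite /vertex_num; ring.
by rewrite !mulr_ge0 // subr_ge0.
Qed.

End Vertex.

Section OutputLogOdds.
Variables (R : realType) (u v : R).
Hypotheses (u_ge0 : 0 <= u) (v_ge0 : 0 <= v) (uv_gt0 : 0 < u + v).

Let vu_gt0 : 0 < v + u. Proof. by rewrite addrC. Qed.

Definition out_logodds (x : R) : R := ln (v * x + u) - ln (u * x + v).

Lemma out_odds_gt0 x : 0 < x -> 0 < v * x + u /\ 0 < u * x + v.
Proof.
by move=> x0; split; rewrite -[X in _ + X]mulr1; apply: addr_wmul_gt0.
Qed.

Lemma out_logodds_vertex M N : 1 < M -> 1 < N ->
  out_logodds (vertex_odds0 M N) - out_logodds (vertex_odds1 M N)
  = (ln (vertex_num v u M N) - ln (vertex_num u v M N))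
    - (ln (vertex_num u v N M) - ln (vertex_num v u N M)).
Proof.
move=> M1 N1; have M0 : 0 < M - 1 by lra.
have NM0 : 0 < N * (M - 1) by rewrite mulr_gt0 //; lra.
have := vertex_num_gt0 v_ge0 u_ge0 vu_gt0 M1 N1.
have := vertex_num_gt0 u_ge0 v_ge0 uv_gt0 M1 N1.
have := vertex_num_gt0 v_ge0 u_ge0 vu_gt0 N1 M1.
have := vertex_num_gt0 u_ge0 v_ge0 uv_gt0 N1 M1.
move=> p1 p2 p3 p4; rewrite /out_logodds /vertex_odds0 /vertex_odds1.
have -> : v * (M * (N - 1) / (M - 1)) + u = vertex_num v u M N / (M - 1).
  by rewrite /vertex_num; field; rewrite gt_eqF.
have -> : u * (M * (N - 1) / (M - 1)) + v = vertex_num u v M N / (M - 1).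
  by rewrite /vertex_num; field; rewrite gt_eqF.
have -> : v * ((N - 1) / (N * (M - 1))) + u = vertex_num u v N M / (N * (M - 1)).
  by rewrite /vertex_num; field; rewrite !gt_eqF //; lra.
have -> : u * ((N - 1) / (N * (M - 1))) + v = vertex_num v u N M / (N * (M - 1)).
  by rewrite /vertex_num; field; rewrite !gt_eqF //; lra.
by rewrite !ln_div ?posrE //; lra.
Qed.

Lemma out_odds_mulE z :
  (v * z + u) * (u * z + v) = (u + v) ^+ 2 * z + u * v * (z - 1) ^+ 2.
Proof. by ring. Qed.

(* The derivative of [k ln z - l out_logodds z] is
   [(k (v z + u) (u z + v) - l (v^2 - u^2) z) / (z (v z + u) (u z + v))]. *)
Lemma out_logodds_cmp (k l a b : R) : 0 <= a ->
  (forall z, a < z < b -> l * (v ^+ 2 - u ^+ 2) * z <= k * ((v * z + u) * (u * z + v))) ->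
  forall x y, a < y -> y <= x -> x < b ->
  l * (out_logodds x - out_logodds y) <= k * (ln x - ln y).
Proof.
move=> a0 hkl x y ay yx xb.
pose f z := k * ln z - l * out_logodds z.
have df (z : R) : 0 < z -> is_derive z 1 f
    (k * z^-1 - l * ((v * z + u)^-1 * v - (u * z + v)^-1 * u)).
  move=> z0; have [p1 p2] := out_odds_gt0 z0.
  have d1 := is_derive_ln_affine p1; have d2 := is_derive_ln_affine p2.
  have d0 := is_derive1_ln z0.
  by rewrite /f /out_logodds; apply: is_derive_eq.
suff : f y <= f x by rewrite /f; lra.
apply: (@ger0_derive1_ndecr R f y x) => //.
- move=> z; rewrite in_itv /= => /andP[yz zx].
  have z0 : 0 < z by lra.
  by case: (df z z0).
- move=> z; rewrite in_itv /= => /andP[yz zx].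
  have z0 : 0 < z by lra.
  have [p1 p2] := out_odds_gt0 z0.
  rewrite derive1E; case: (df z z0) => _ ->.
  have -> : k * z^-1 - l * ((v * z + u)^-1 * v - (u * z + v)^-1 * u) =
      (k * ((v * z + u) * (u * z + v)) - l * (v ^+ 2 - u ^+ 2) * z)
      / (z * (v * z + u) * (u * z + v)).
    by field; rewrite !gt_eqF.
  apply: divr_ge0; first by have := hkl z (ltac:(lra)); lra.
  by rewrite !mulr_ge0 // ltW.
- apply: continuous_in_subspaceT => z; rewrite inE /= in_itv /= => /andP[yz zx].
  have z0 : 0 < z by lra.
  have [+ _] := df z z0.
  by move/derivable1_diffP/differentiable_continuous.
Qed.

Lemma out_logodds_lipschitz x y : 0 < y -> y <= x ->
  `|out_logodds x - out_logodds y| <= `|v - u| / (v + u) * (ln x - ln y).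
Proof.
move=> y0 yx.
suff bound l : `|l| = 1 -> l * (out_logodds x - out_logodds y)
    <= `|v - u| / (v + u) * (ln x - ln y).
  have := bound 1; have := bound (-1); rewrite normrN normr1 => /(_ erefl) ? /(_ erefl) ?.
  by rewrite ler_norml; apply/andP; split; lra.
move=> l1; apply: (@out_logodds_cmp _ l 0 (x + 1)) => //; last lra.
move=> z /andP[z0 _].
have lvu : l * (v - u) <= `|v - u|.
  by rewrite -[X in _ <= X]mul1r -l1 -normrM ler_norm.
have := ler_wpM2r (mulr_ge0 (ltW uv_gt0) (ltW z0)) lvu.
have : 0 <= `|v - u| / (v + u) * (u * v * (z - 1) ^+ 2).
  apply: mulr_ge0; first by rewrite divr_ge0 // ltW.
  by rewrite mulr_ge0 ?sqr_ge0 ?mulr_ge0.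
have : `|v - u| / (v + u) * ((v * z + u) * (u * z + v))
    = `|v - u| * ((u + v) * z) + `|v - u| / (v + u) * (u * v * (z - 1) ^+ 2).
  by field; rewrite gt_eqF.
lra.
Qed.

Lemma out_logodds_lower (k a b x y : R) : 0 <= a ->
  (forall z, a < z < b -> k * ((v * z + u) * (u * z + v)) <= `|v ^+ 2 - u ^+ 2| * z) ->
  a < y -> y <= x -> x < b ->
  k * (ln x - ln y) <= `|out_logodds x - out_logodds y|.
Proof.
move=> a0 hk ay yx xb.
have [l [l1 lsq]] : exists l : R, `|l| = 1 /\ l * (v ^+ 2 - u ^+ 2) = - `|v ^+ 2 - u ^+ 2|.
  have [uv|vu] := leP u v.
    exists (-1); rewrite normrN normr1 ger0_norm ?subr_ge0 ?ler_sqr //.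
    by split => //; ring.
  exists 1; rewrite normr1 ler0_norm ?subr_le0 ?ler_sqr ?ltW //.
  by split => //; ring.
have hl : l * (out_logodds x - out_logodds y) <= - k * (ln x - ln y).
  by apply: (@out_logodds_cmp (- k) l a b a0 _ x y ay yx xb) => z /hk; rewrite lsq; lra.
have := ler_norm (- (l * (out_logodds x - out_logodds y))).
rewrite normrN normrM l1 mul1r; lra.
Qed.

(* By [out_odds_mulE] and [u v <= (u + v)^2 / 4], near [z = 1] the slope of
   [out_logodds] in [ln z] is within [e] of [|v - u| / (v + u)]. *)
Lemma out_logodds_slope_near1 (e d z : R) : 0 < d -> d <= 2^-1 -> d <= e ->
  1 - d < z < 1 + d ->
  (`|v - u| / (v + u) - e) * ((v * z + u) * (u * z + v)) <= `|v ^+ 2 - u ^+ 2| * z.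
Proof.
move=> d0 d_half de /andP[z1 z2].
set eta := `|v - u| / (v + u).
have eta1 : eta <= 1.
  rewrite ler_pdivrMr // mul1r ler_norml.
  by apply/andP; split; move: (u_ge0) (v_ge0); lra.
have normE : `|v ^+ 2 - u ^+ 2| = eta * (u + v) ^+ 2.
  rewrite /eta subr_sqr normrM (ger0_norm (ltW vu_gt0)).
  by field; rewrite gt_eqF.
have w_le : (z - 1) ^+ 2 <= e / 2 by nra.
have uv4 : u * v <= (u + v) ^+ 2 / 4 by have := sqr_ge0 (u - v); lra.
have uv0 : 0 <= u * v by rewrite mulr_ge0.
have h1 : eta * (u * v * (z - 1) ^+ 2) <= u * v * (z - 1) ^+ 2.
  by rewrite ler_piMl // mulr_ge0 ?sqr_ge0.
have h2 : u * v * (z - 1) ^+ 2 <= (u + v) ^+ 2 / 4 * (e / 2).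
  by rewrite ler_pM ?sqr_ge0.
have h3 : 0 <= e * ((u + v) ^+ 2 * (z - 1 / 8)).
  by apply: mulr_ge0; [lra | apply: mulr_ge0; [exact: sqr_ge0 | lra]].
have h4 : 0 <= e * (u * v * (z - 1) ^+ 2).
  by apply: mulr_ge0; [lra | rewrite mulr_ge0 ?sqr_ge0].
have := out_odds_mulE z; rewrite normE; lra.
Qed.

End OutputLogOdds.

Section MaxRatio.
Variables (R : realType) (X : finType).
Implicit Types P Q : X -> R.

Lemma ler_maxratio P Q x : P x / Q x <= maxratio P Q.
Proof. by rewrite /maxratio (bigD1 x) //= le_max lexx. Qed.

Lemma maxratio_le P Q B : 0 <= B -> (forall x, P x / Q x <= B) -> maxratio P Q <= B.
Proof.
by move=> B0 h; rewrite /maxratio; elim/big_ind: _ => // a b a0 b0; rewrite ge_max a0.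
Qed.

Lemma ler_term_sum (F : X -> R) y : (forall x, 0 <= F x) -> F y <= \sum_x F x.
Proof. by move=> F0; rewrite (bigD1 y) //= lerDl sumr_ge0. Qed.

Lemma dist_le1 P x : is_dist P -> P x <= 1.
Proof. by case=> P0 <-; apply: ler_term_sum. Qed.

Lemma same_support_sym P Q : same_support P Q -> same_support Q P.
Proof. by move=> ss x; rewrite ss. Qed.

Lemma admissible_sym P Q : admissible P Q -> admissible Q P.
Proof.
case=> dP dQ /same_support_sym ss [x Px_neq]; split => //.
by exists x; rewrite eq_sym.
Qed.

Lemma dist_le_maxratio P0 P1 x : is_dist P1 -> same_support P0 P1 ->
  P0 x <= maxratio P0 P1 * P1 x.
Proof.
move=> [P1_ge0 _] ss; have [P1x0|P1x_neq0] := eqVneq (P1 x) 0.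
  have /eqP -> : P0 x == 0 by rewrite ss P1x0.
  by rewrite P1x0 mulr0.
have P1x_gt0 : 0 < P1 x by rewrite lt_def P1x_neq0 P1_ge0.
by rewrite -ler_pdivrMr // ler_maxratio.
Qed.

(* The total slack [sum_x (M P1 x - P0 x)] equals [M - 1]. *)
Lemma maxratio_slack P0 P1 y : is_dist P0 -> is_dist P1 -> same_support P0 P1 ->
  maxratio P0 P1 * P1 y - P0 y <= maxratio P0 P1 - 1.
Proof.
move=> [_ s0] d1 ss; have [_ s1] := d1.
have -> : maxratio P0 P1 - 1 = \sum_x (maxratio P0 P1 * P1 x - P0 x).
  by rewrite sumrB -mulr_sumr s0 s1 mulr1.
apply: (@ler_term_sum (fun x => maxratio P0 P1 * P1 x - P0 x)) => x.
by rewrite subr_ge0 dist_le_maxratio.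
Qed.

Lemma maxratio_gt1 P0 P1 : admissible P0 P1 -> 1 < maxratio P0 P1.
Proof.
move=> [[P0_ge0 s0] d1 ss [x0 P01]]; rewrite ltNge; apply/negP => M_le1.
have P01_le x : P0 x <= P1 x.
  apply: le_trans (dist_le_maxratio x d1 ss) _.
  by apply: ler_piMl => //; case: d1.
have : \sum_x (P1 x - P0 x) = 0 by rewrite sumrB s0; case: d1 => _ ->; rewrite subrr.
move/eqP; rewrite psumr_eq0 => [/allP/(_ x0 (mem_index_enum _))|x _].
  by rewrite implyTb subr_eq0 eq_sym (negbTE P01).
by rewrite subr_ge0.
Qed.

Lemma DJinf_gt0 P0 P1 : admissible P0 P1 -> 0 < DJinf P0 P1.
Proof.
move=> adm; rewrite /DJinf /Dinf addr_gt0 // ln_gt0 // maxratio_gt1 //.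
exact: admissible_sym.
Qed.

Lemma jratio_sym (W : X -> X -> R) P0 P1 : jratio W P0 P1 = jratio W P1 P0.
Proof. by rewrite /jratio /DJinf addrC [Dinf P1 P0 + _]addrC. Qed.

Lemma ln_ratio_le_Dinf P Q x : 0 < P x -> 0 < Q x -> ln (P x) - ln (Q x) <= Dinf P Q.
Proof.
move=> Px Qx; have PQx := divr_gt0 Px Qx.
rewrite -ln_div ?posrE // ler_ln ?posrE ?ler_maxratio //.
exact: lt_le_trans PQx (ler_maxratio _ _ _).
Qed.

Lemma DJinf_ge_log_odds_diff P Q x y : 0 < P x -> 0 < P y -> 0 < Q x -> 0 < Q y ->
  `|(ln (P x) - ln (P y)) - (ln (Q x) - ln (Q y))| <= DJinf P Q.
Proof.
move=> Px Py Qx Qy.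
have := ln_ratio_le_Dinf Px Qx; have := ln_ratio_le_Dinf Py Qy.
have := ln_ratio_le_Dinf Qx Px; have := ln_ratio_le_Dinf Qy Py.
by rewrite /DJinf ler_norml; move=> *; apply/andP; split; lra.
Qed.

End MaxRatio.

Section UpperBound.
Variables (R : realType) (X : finType) (u v : R).
Hypotheses (u_ge0 : 0 <= u) (v_ge0 : 0 <= v) (uv_gt0 : 0 < u + v).
Implicit Types P : X -> R.

Lemma push_qsc P y : is_dist P -> push (qsc u v) P y = u + (v - u) * P y.
Proof.
case=> _ s; have sumE : \sum_(x | x != y) P x = 1 - P y.
  by move: s; rewrite (bigD1 y) //= => <-; rewrite addrAC subrr add0r.
rewrite /push (bigD1 y) //= /qsc eqxx.
under eq_bigr => x xy do rewrite eq_sym (negbTE xy).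
by rewrite -big_distrl /= sumE; ring.
Qed.

(* [(s, t)] stands for [(P0 y, P1 y)]; the bounds are the values at the vertex
   [s = M t], [N s - t = N - 1] (resp. [t = N s], [M t - s = M - 1]), and each
   difference is an explicit nonnegative combination of the constraint slacks. *)
Lemma qsc_ratio_vertex_bound (M N s t : R) : 1 <= M -> 1 <= N ->
  s <= M * t -> t <= N * s -> M * t - s <= M - 1 -> N * s - t <= N - 1 ->
  (u <= v -> (u + (v - u) * s) * vertex_num u v N M
             <= (u + (v - u) * t) * vertex_num v u M N) /\
  (v <= u -> (u + (v - u) * s) * vertex_num v u N M
             <= (u + (v - u) * t) * vertex_num u v M N).
Proof.
move=> M1 N1 h1 h2 h3 h4; rewrite /vertex_num; split => huv.
- have -> : (u + (v - u) * t) * (v * M * (N - 1) + u * (M - 1)) =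
      (u + (v - u) * s) * (u * N * (M - 1) + v * (N - 1)) +
      ((v - u) * (N - 1) * v * (M * t - s)
       + u * (v - u) * (M - 1) * (N - 1 - (N * s - t))) by ring.
  by rewrite lerDl; apply: addr_ge0; repeat apply: mulr_ge0 => //; lra.
- have -> : (u + (v - u) * t) * (u * M * (N - 1) + v * (M - 1)) =
      (u + (v - u) * s) * (v * N * (M - 1) + u * (N - 1)) +
      ((u - v) * (M - 1) * v * (N * s - t)
       + u * (u - v) * (N - 1) * (M - 1 - (M * t - s))) by ring.
  by rewrite lerDl; apply: addr_ge0; repeat apply: mulr_ge0 => //; lra.
Qed.

Lemma maxratio_push_le P0 P1 : admissible P0 P1 ->
  let M := maxratio P0 P1 in let N := maxratio P1 P0 in
  let r := maxratio (push (qsc u v) P0) (push (qsc u v) P1) in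
  (u <= v -> r <= vertex_num v u M N / vertex_num u v N M) /\
  (v <= u -> r <= vertex_num u v M N / vertex_num v u N M).
Proof.
move=> adm M N r.
have M1 : 1 < M := maxratio_gt1 adm.
have N1 : 1 < N := maxratio_gt1 (admissible_sym adm).
have vu_gt0 : 0 < v + u by rewrite addrC.
have := vertex_num_gt0 v_ge0 u_ge0 vu_gt0 M1 N1.
have := vertex_num_gt0 u_ge0 v_ge0 uv_gt0 M1 N1.
have := vertex_num_gt0 v_ge0 u_ge0 vu_gt0 N1 M1.
have := vertex_num_gt0 u_ge0 v_ge0 uv_gt0 N1 M1.
move=> p1 p2 p3 p4.
case: adm => d0 d1 ss _; have ss' := same_support_sym ss.
have bound y := qsc_ratio_vertex_bound (ltW M1) (ltW N1)
  (dist_le_maxratio y d1 ss) (dist_le_maxratio y d0 ss')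
  (maxratio_slack y d0 d1 ss) (maxratio_slack y d1 d0 ss').
have Q1_ge0 y : 0 <= u + (v - u) * P1 y.
  have := dist_le1 y d1; case: d1 => /(_ y) P1y _; move: (u_ge0) (v_ge0); nra.
split=> huv; (apply: maxratio_le => [|y]; first by rewrite divr_ge0 // ltW);
  rewrite !push_qsc //; apply: ler_div_cross => //; try exact: ltW.
  by have [+ _] := bound y; apply.
by have [_ +] := bound y; apply.
Qed.

Lemma DJinf_push_le_vertex P0 P1 : admissible P0 P1 ->
  DJinf (push (qsc u v) P0) (push (qsc u v) P1)
    <= `|out_logodds u v (vertex_odds0 (maxratio P0 P1) (maxratio P1 P0))
         - out_logodds u v (vertex_odds1 (maxratio P0 P1) (maxratio P1 P0))|.
Proof.
move=> adm; set M := maxratio P0 P1; set N := maxratio P1 P0.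
have M1 : 1 < M := maxratio_gt1 adm.
have N1 : 1 < N := maxratio_gt1 (admissible_sym adm).
have [b01 b01'] := maxratio_push_le adm.
have [b10 b10'] := maxratio_push_le (admissible_sym adm).
have ln_le (m a b : R) K L : 0 <= a -> 0 <= b -> 0 < a + b -> b <= a -> 1 < K -> 1 < L ->
    m <= vertex_num a b K L / vertex_num b a L K ->
    ln m <= ln (vertex_num a b K L) - ln (vertex_num b a L K).
  move=> a0 b0 ab ba K1 L1 mle; have ba0 : 0 < b + a by rewrite addrC.
  have n0 := vertex_num_gt0 a0 b0 ab K1 L1; have n1 := vertex_num_gt0 b0 a0 ba0 L1 K1.
  rewrite -ln_div ?posrE //; apply: ln_le_ge1 mle.
  by rewrite ler_pdivlMr // mul1r vertex_num_le // ltW.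
have vu_gt0 : 0 < v + u by rewrite addrC.
have := out_logodds_vertex u_ge0 v_ge0 uv_gt0 M1 N1.
have := ler_norm (out_logodds u v (vertex_odds0 M N) - out_logodds u v (vertex_odds1 M N)).
rewrite -normrN; have := ler_norm (- (out_logodds u v (vertex_odds0 M N)
  - out_logodds u v (vertex_odds1 M N))).
rewrite /DJinf /Dinf; have [uv|vu] := leP u v.
- have := ln_le _ _ _ _ _ v_ge0 u_ge0 vu_gt0 uv M1 N1 (b01 uv).
  have := ln_le _ _ _ _ _ v_ge0 u_ge0 vu_gt0 uv N1 M1 (b10 uv).
  by rewrite normrN; lra.
- have := ln_le _ _ _ _ _ u_ge0 v_ge0 uv_gt0 (ltW vu) M1 N1 (b01' (ltW vu)).
  have := ln_le _ _ _ _ _ u_ge0 v_ge0 uv_gt0 (ltW vu) N1 M1 (b10' (ltW vu)).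
  by rewrite normrN; lra.
Qed.

Lemma DJinf_push_le P0 P1 : admissible P0 P1 ->
  DJinf (push (qsc u v) P0) (push (qsc u v) P1) <= `|v - u| / (v + u) * DJinf P0 P1.
Proof.
move=> adm; have M1 := maxratio_gt1 adm; have N1 := maxratio_gt1 (admissible_sym adm).
case/andP: (vertex_odds_le M1 N1) => o1_gt0 o1_le.
apply: le_trans (DJinf_push_le_vertex adm) _.
rewrite /DJinf /Dinf -ln_vertex_odds //.
exact: out_logodds_lipschitz.
Qed.

Lemma jratio_le P0 P1 : admissible P0 P1 -> jratio (qsc u v) P0 P1 <= `|v - u| / (v + u).
Proof.
by move=> adm; rewrite /jratio ler_pdivrMr ?DJinf_gt0 // DJinf_push_le.
Qed.

End UpperBound.

Section BinaryInputs.
Variables (R : realType) (X : finType).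
Implicit Types (a b : X) (p r : R).

Definition odds p : R := p / (1 - p).

Definition binary_dist a b p (x : X) : R :=
  if x == a then p else if x == b then 1 - p else 0.

Lemma odds_lt p r : 0 <= r -> r < p -> p < 1 -> odds r < odds p.
Proof.
move=> r0 rp p1; rewrite /odds ltr_pdivrMr 1?mulrAC ?ltr_pdivlMr; lra.
Qed.

Lemma binary_dist_b a b p : a != b -> binary_dist a b p b = 1 - p.
Proof. by move=> ab; rewrite /binary_dist eq_sym (negbTE ab) eqxx. Qed.

Lemma binary_distC a b p : a != b -> binary_dist a b p = binary_dist b a (1 - p).
Proof.
move=> ab; apply/funext => x; rewrite /binary_dist.
have [->|xa] := eqVneq x a; first by rewrite (negbTE ab); ring.
by case: eqP.
Qed.

Lemma sum_pair_support a b (F : X -> R) : a != b ->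
  (forall x, x != a -> x != b -> F x = 0) -> \sum_x F x = F a + F b.
Proof.
move=> ab F0; rewrite (bigD1 a) //= (bigD1 b) 1?eq_sym //= big1 ?addr0 //.
by move=> x /andP[xb xa]; apply: F0.
Qed.

Lemma is_dist_binary a b p : a != b -> 0 <= p <= 1 -> is_dist (binary_dist a b p).
Proof.
move=> ab /andP[p0 p1]; split.
  by move=> x; rewrite /binary_dist; case: ifP => _; [|case: ifP => _]; lra.
rewrite (sum_pair_support ab) ?binary_dist_b // ?/binary_dist ?eqxx; first lra.
by move=> x /negbTE -> /negbTE ->.
Qed.

Lemma binary_dist_eq a b P : a != b -> is_dist P ->
  (forall x, x != a -> x != b -> P x = 0) -> P = binary_dist a b (P a).
Proof.
move=> ab [_ s] P0; apply/funext => x; rewrite /binary_dist.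
have [->|xa] := eqVneq x a => //; have [->|xb] := eqVneq x b; last exact: P0.
by move: s; rewrite (sum_pair_support ab P0) => <-; rewrite addrAC subrr add0r.
Qed.

Lemma admissible_binary a b p r : a != b -> 0 < p < 1 -> 0 < r < 1 -> p != r ->
  admissible (binary_dist a b p) (binary_dist a b r).
Proof.
move=> ab /andP[p0 p1] /andP[r0 r1] pr; split.
- by apply: is_dist_binary => //; rewrite !ltW.
- by apply: is_dist_binary => //; rewrite !ltW.
- move=> x; rewrite /binary_dist; case: ifP => _; first by rewrite !gt_eqF.
  by case: ifP => _ //; rewrite !gt_eqF // subr_gt0.
- by exists a; rewrite /binary_dist eqxx.
Qed.

Lemma maxratio_binary a b p r : a != b -> 0 < r <= p -> p < 1 ->
  maxratio (binary_dist a b p) (binary_dist a b r) = p / r.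
Proof.
move=> ab /andP[r0 rp] p1; have pr_ge1 : 1 <= p / r by rewrite ler_pdivlMr ?mul1r.
apply/le_anti/andP; split; last by have := ler_maxratio (binary_dist a b p)
  (binary_dist a b r) a; rewrite /binary_dist eqxx.
apply: maxratio_le => [|x]; first lra.
rewrite /binary_dist; case: ifP => // _; case: ifP => _; last by rewrite mul0r; lra.
by apply: le_trans pr_ge1; rewrite ler_pdivrMr ?mul1r; lra.
Qed.

Lemma DJinf_binary a b p r : a != b -> 0 < r <= p -> p < 1 ->
  DJinf (binary_dist a b p) (binary_dist a b r) = ln (odds p) - ln (odds r).
Proof.
move=> ab rp p1; have [r0 rp'] := andP rp; have ba : b != a by rewrite eq_sym.
have rp1 : 0 < 1 - p <= 1 - r by apply/andP; split; lra.
rewrite /DJinf /Dinf (maxratio_binary ab rp p1).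
rewrite (@binary_distC a b p ab) (@binary_distC a b r ab) (maxratio_binary ba rp1); last lra.
by rewrite /odds !ln_div ?posrE ?subr_gt0 //; lra.
Qed.

End BinaryInputs.

Section LowerBound.
Variables (R : realType) (X : finType) (u v : R).
Hypotheses (u_ge0 : 0 <= u) (v_ge0 : 0 <= v) (uv_gt0 : 0 < u + v).
Variables (a b : X).
Hypothesis ab : a != b.

Let Q p := push (qsc u v) (binary_dist a b p).

Lemma push_binary_log_odds p : 0 < p < 1 ->
  [/\ 0 < Q p a, 0 < Q p b & ln (Q p a) - ln (Q p b) = out_logodds u v (odds p)].
Proof.
move=> /andP[p0 p1]; have q0 : 0 < 1 - p by lra.
have [pa pb] := out_odds_gt0 u_ge0 v_ge0 uv_gt0 (divr_gt0 p0 q0).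
have dp : is_dist (binary_dist a b p) by apply: is_dist_binary => //; rewrite !ltW.
have Qa : Q p a = (1 - p) * (v * odds p + u).
  by rewrite /Q push_qsc // /binary_dist eqxx /odds; field; rewrite gt_eqF.
have Qb : Q p b = (1 - p) * (u * odds p + v).
  by rewrite /Q push_qsc // binary_dist_b // /odds; field; rewrite gt_eqF.
rewrite Qa Qb !mulr_gt0 // !lnM ?posrE //; split => //.
by rewrite /out_logodds; lra.
Qed.

Lemma DJinf_push_binary_ge p r : 0 < p < 1 -> 0 < r < 1 ->
  `|out_logodds u v (odds p) - out_logodds u v (odds r)| <= DJinf (Q p) (Q r).
Proof.
move=> /push_binary_log_odds[pa pb <-] /push_binary_log_odds[ra rb <-].
exact: DJinf_ge_log_odds_diff.
Qed.

Lemma jratio_binary_ge (k lo hi p r : R) : 0 <= lo ->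
  (forall z, lo < z < hi -> k * ((v * z + u) * (u * z + v)) <= `|v ^+ 2 - u ^+ 2| * z) ->
  0 < r -> r < p -> p < 1 -> lo < odds r -> odds p < hi ->
  k <= jratio (qsc u v) (binary_dist a b p) (binary_dist a b r).
Proof.
move=> lo0 hk r0 rp p1 lo_r p_hi.
have odds_rp := odds_lt (ltW r0) rp p1.
have odds_r0 : 0 < odds r by rewrite divr_gt0 //; lra.
have DJ_gt0 : 0 < ln (odds p) - ln (odds r).
  by rewrite subr_gt0 ltr_ln ?posrE //; apply: lt_trans odds_rp.
rewrite /jratio DJinf_binary //; last by rewrite r0 ltW.
rewrite ler_pdivlMr //.
apply: le_trans (DJinf_push_binary_ge _ _); last 2 first.
- by apply/andP; split; lra.
- by apply/andP; split; lra.
by apply: (out_logodds_lower u_ge0 v_ge0 uv_gt0 lo0 hk) => //; apply: ltW.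
Qed.

Lemma odds_near_half (d p : R) : 0 < d -> d <= 2^-1 -> `|2^-1 - p| < d / 8 ->
  0 < p < 1 /\ 1 - d < odds p < 1 + d.
Proof.
move=> d0 d1; rewrite ltr_norml => /andP[h1 h2]; have q0 : 0 < 1 - p by lra.
split; first by apply/andP; split; lra.
by rewrite /odds ltr_pdivlMr // ltr_pdivrMr //; apply/andP; split; nra.
Qed.

Lemma jratio_binary_near_uniform (e p r : R) : 0 < e -> p != r ->
  `|2^-1 - p| < Num.min (2^-1) e / 8 -> `|2^-1 - r| < Num.min (2^-1) e / 8 ->
  `| `|v - u| / (v + u) - jratio (qsc u v) (binary_dist a b p) (binary_dist a b r)| <= e.
Proof.
move=> e0 pr; set d := Num.min (2^-1) e.
have d0 : 0 < d by rewrite lt_min e0 invr_gt0 ltr0n.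
have d_half : d <= 2^-1 by rewrite ge_min lexx.
have de : d <= e by rewrite ge_min lexx orbT.
wlog rp : p r pr / r < p.
  move=> hwlog hp hr; have [rp|pr'|] := ltgtP r p; first exact: hwlog.
    by rewrite jratio_sym; apply: hwlog; rewrite // eq_sym.
  by move=> rp; rewrite rp eqxx in pr.
move=> /(odds_near_half d0 d_half)[p01 /andP[_ p_hi]].
move=> /(odds_near_half d0 d_half)[r01 /andP[lo_r _]].
have [[_ p1] [r0 _]] := (andP p01, andP r01).
have le := jratio_le u_ge0 v_ge0 uv_gt0 (admissible_binary ab p01 r01 pr).
have slope z := out_logodds_slope_near1 u_ge0 v_ge0 uv_gt0 (z := z) d0 d_half de.
have lo0 : 0 <= 1 - d by lra.
have ge := jratio_binary_ge lo0 slope r0 rp p1 lo_r p_hi.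
by rewrite ler_norml; apply/andP; split; lra.
Qed.

End LowerBound.

Lemma jratio_unif_binary_cvg (R : realType) (X : finType) (u v : R) (a b : X)
    (P0 P1 : nat -> X -> R) :
  0 <= u -> 0 <= v -> 0 < u + v -> a != b -> unif_binary_seq a b P0 P1 ->
  (fun n => jratio (qsc u v) (P0 n) (P1 n)) @ \oo --> `|v - u| / (v + u).
Proof.
move=> u_ge0 v_ge0 uv_gt0 ab [dist supp ne [cv0 _] [cv1 _]].
have P0E n : P0 n = binary_dist a b (P0 n a).
  by apply: binary_dist_eq ab (dist n).1 _ => x xa xb; case: (supp n x xa xb).
have P1E n : P1 n = binary_dist a b (P1 n a).
  by apply: binary_dist_eq ab (dist n).2 _ => x xa xb; case: (supp n x xa xb).
have P01 n : P0 n a != P1 n a.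
  apply: contraTneq isT => P01; have [x] := ne n.
  by rewrite P0E P1E P01 eqxx.
apply/cvgrPdist_le => e e0.
have d8 : 0 < Num.min (2^-1) e / 8 by rewrite divr_gt0 // lt_min e0 invr_gt0 ltr0n.
move/cvgrPdist_lt: cv0 => /(_ _ d8) near0; move/cvgrPdist_lt: cv1 => /(_ _ d8) near1.
near=> n; rewrite P0E P1E.
apply: jratio_binary_near_uniform => //; near: n; [exact: near0 | exact: near1].
Unshelve. all: end_near.
Qed.

Lemma unif_binary_seq_shift (R : realType) (X : finType) (a b : X) (h : nat -> R) :
  a != b -> (forall n, 0 < h n < 2^-1) -> h @ \oo --> 0 ->
  unif_binary_seq a b (fun n => binary_dist a b (2^-1 + h n))
                      (fun n => binary_dist a b (2^-1 - h n)).
Proof.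
move=> ab h_range h0.
have cvg_plus : (fun n => 2^-1 + h n) @ \oo --> (2^-1 : R).
  by rewrite -[X in _ --> X]addr0; apply: cvgD => //; exact: cvg_cst.
have cvg_minus : (fun n => 2^-1 - h n) @ \oo --> (2^-1 : R).
  by rewrite -[X in _ --> X]subr0; apply: cvgB => //; exact: cvg_cst.
have cvg_compl (g : nat -> R) :
    g @ \oo --> (2^-1 : R) -> (fun n => 1 - g n) @ \oo --> (2^-1 : R).
  move=> g_cvg; rewrite [X in _ --> X](_ : _ = 1 - 2^-1); last by field.
  exact: cvgB (cvg_cst _) g_cvg.
have ba : b != a by rewrite eq_sym.
split=> [n|n x xa xb|n||]; rewrite /binary_dist ?eqxx ?(negbTE ba).
- by have := h_range n; split; apply: is_dist_binary => //; apply/andP; split; lra.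
- by rewrite (negbTE xa) (negbTE xb).
- by exists a; rewrite eqxx; have := h_range n; apply: contraTneq; lra.
- by split; [|apply: cvg_compl].
- by split; [|apply: cvg_compl].
Qed.

Lemma sup_eq_cvg (R : realType) (S : set R) (f : nat -> R) (l : R) :
  ubound S l -> (forall n, S (f n)) -> f @ \oo --> l -> sup S = l.
Proof.
move=> ubS Sf fl; have S0 : S !=set0 by exists (f 0).
have supS : has_sup S by split => //; exists l.
apply/le_anti/andP; split; first exact: ge_sup S0 ubS.
rewrite -(cvg_lim _ fl) //; apply: limr_le; first by apply/cvg_ex; exists l.
by near=> n; apply: sup_upper_bound.
Unshelve. all: end_near.
Qed.

Theorem theorem4p6 (R : realType) (q : nat) (X : finType) (u v : R) :
  (2 <= q)%N -> #|X| = q ->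
  0 <= u <= 1 -> 0 <= v <= 1 -> v = 1 - (q%:R - 1) * u ->
  sup [set r : R | exists P0 P1 : X -> R,
         admissible P0 P1 /\ r = jratio (qsc u v) P0 P1]
    = `|v - u| / (v + u)
  /\ (forall a b : X, a != b ->
        (exists P0 P1 : nat -> X -> R, unif_binary_seq a b P0 P1)
        /\ (forall P0 P1 : nat -> X -> R, unif_binary_seq a b P0 P1 ->
              (fun n => jratio (qsc u v) (P0 n) (P1 n)) @ \oo
                --> `|v - u| / (v + u))).
Proof.
move=> q_ge2 cardX /andP[u_ge0 _] /andP[v_ge0 _] vE.
have uv_gt0 : 0 < u + v.
  have [u_gt0|u_le0] := ltP 0 u; first lra.
  have u0 : u = 0 by apply/le_anti/andP.
  by rewrite vE u0 mulr0 subr0 add0r ltr01.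
pose h n : R := harmonic n / 4.
have h_range n : 0 < h n < 2^-1.
  have : harmonic n <= 1 :> R by rewrite /= invf_le1 ?ler1n ?ltr0n.
  by have := harmonic_gt0 (R := R) n; rewrite /h; lra.
have h0 : h @ \oo --> 0.
  by have := cvgM cvg_harmonic (cvg_cst (4^-1 : R)); rewrite mul0r; apply.
have seqP a b := @unif_binary_seq_shift R X a b h.
have [a [b ab]] : exists a b : X, a != b.
  have /card_gt1P[a [b [_ _ ab]]] : (1 < #|X|)%N by rewrite cardX.
  by exists a, b.
split=> [|a' b' ab']; last first.
  by split=> [|P0 P1]; [do 2 eexists; exact: seqP | exact: jratio_unif_binary_cvg].
apply: sup_eq_cvg (jratio_unif_binary_cvg u_ge0 v_ge0 uv_gt0 ab (seqP a b ab h_range h0)).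
  by move=> _ [P0 [P1 [adm ->]]]; exact: jratio_le.
move=> n; do 2 eexists; split; last reflexivity.
have [h_gt0 h_lt] := andP (h_range n).
apply: admissible_binary => //; last by rewrite gt_eqF //; lra.
all: by apply/andP; split; lra.
Qed.
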